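(* Let $G_0$ be one of $\mathrm{SL}(2,\mathbb R)$, $\mathrm{SL}(2,\mathbb C)$, or $\mathrm{SO}_e(n,1)$ with $n\ge2$, with Lie algebra $\mathfrak g_0$. Let $\mathfrak g=\mathfrak g_0\times\mathfrak g_0\times\mathfrak g_0$ and $\mathfrak h=\{(X,X,X):X\in\mathfrak g_0\}$. Let $\mathfrak p=\mathfrak p_1\times\mathfrak p_2\times\mathfrak p_3$ be a minimal parabolic subalgebra of $\mathfrak g$, where each $\mathfrak p_j$ is a minimal parabolic subalgebra of $\mathfrak g_0$. Then $\mathfrak g=\mathfrak p+\mathfrak h$ if and only if $\mathfrak p_1,\mathfrak p_2,\mathfrak p_3$ are pairwise distinct. In particular, there exists a minimal parabolic subalgebra $\mathfrak p$ of $\mathfrak g$ with $\mathfrak g=\mathfrak p+\mathfrak h$. *)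

From HB Require Import structures.
From mathcomp Require Import all_boot all_order all_algebra.
From mathcomp Require Import complex.
From mathcomp Require Import reals.
Set Implicit Arguments. Unset Strict Implicit. Unset Printing Implicit Defensive.
Import Order.TTheory GRing.Theory Num.Theory.
Local Open Scope ring_scope.

Section Generic.
Variables (F : fieldType) (k : nat).
Notation M := 'M[F]_k.

Definition same_set (S T : M -> Prop) : Prop := forall X, S X <-> T X.

(* p is a minimal parabolic subalgebra of g0: an Ad(G0)-conjugate
   g pstd g^-1 (g in G0) of the standard minimal parabolic pstd. *)
Definition minpar (G0 : M -> Prop) (pstd : M -> Prop) (p : M -> Prop) : Prop :=
  exists g, G0 g /\ same_set p (fun X => exists Y, pstd Y /\ X = g *m Y *m invmx g).

(* g0 x g0 x g0 = (p1 x p2 x p3) + diag(g0) *)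
Definition decomp (g0 p1 p2 p3 : M -> Prop) : Prop :=
  forall X1 X2 X3, g0 X1 -> g0 X2 -> g0 X3 ->
    exists Y P1 P2 P3, [/\ g0 Y, p1 P1, p2 P2 & p3 P3] /\
      [/\ X1 = P1 + Y, X2 = P2 + Y & X3 = P3 + Y].

Definition pairwise_distinct (p1 p2 p3 : M -> Prop) : Prop :=
  [/\ ~ same_set p1 p2, ~ same_set p1 p3 & ~ same_set p2 p3].

Definition Prop61 (G0 g0 pstd : M -> Prop) : Prop :=
  (forall p1 p2 p3, minpar G0 pstd p1 -> minpar G0 pstd p2 -> minpar G0 pstd p3 ->
     (decomp g0 p1 p2 p3 <-> pairwise_distinct p1 p2 p3)) /\
  (exists p1 p2 p3, [/\ minpar G0 pstd p1, minpar G0 pstd p2, minpar G0 pstd p3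
                       & decomp g0 p1 p2 p3]).
End Generic.

(* SL(2,F), sl(2,F), and its standard Borel = minimal parabolic (upper triangular),
   used with F = R and F = C = R[i] (sl(2,C) viewed as a real Lie algebra). *)
Definition SL2 (F : fieldType) (g : 'M[F]_2) : Prop := \det g = 1.
Definition sl2 (F : fieldType) (X : 'M[F]_2) : Prop := \tr X = 0.
Definition sl2_pstd (F : fieldType) (X : 'M[F]_2) : Prop :=
  \tr X = 0 /\ X ord_max ord0 = 0.

Definition Jform (R : realType) (n : nat) : 'M[R]_n.+1 :=
  \matrix_(i, j) (if i == j then (if i == ord_max then -1 else 1) else 0).
Definition SOe (R : realType) (n : nat) (g : 'M[R]_n.+1) : Prop :=
  [/\ g^T *m Jform R n *m g = Jform R n, \det g = 1 & 0 < g ord_max ord_max].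
Definition so_n1 (R : realType) (n : nat) (X : 'M[R]_n.+1) : Prop :=
  X^T *m Jform R n + Jform R n *m X = 0.
Definition null_v (R : realType) (n : nat) : 'cV[R]_n.+1 :=
  \col_i (if (i == ord0) || (i == ord_max) then 1 else 0).
(* standard minimal parabolic: stabilizer in so(n,1) of the null line R(e_0+e_n)
   (= m + a + n for the Iwasawa decomposition with a = boosts in the e_0,e_n plane) *)
Definition so_pstd (R : realType) (n : nat) (X : 'M[R]_n.+1) : Prop :=
  so_n1 X /\ exists c : R, X *m null_v R n = c *: null_v R n.

From HB Require Import structures.
From mathcomp Require Import all_boot all_order all_algebra.
From mathcomp Require Import complex.
From mathcomp Require Import reals.
From mathcomp Require Import perm ring.
Set Implicit Arguments. Unset Strict Implicit. Unset Printing Implicit Defensive.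
Import Order.TTheory GRing.Theory Num.Theory.
Local Open Scope ring_scope.

(* Every minimal parabolic of g0 is the stabiliser in g0 of a line g l0 (a line of F^2 for
   sl(2,F), a null line of R^(n,1) for so(n,1)), and equal lines give equal parabolics.
   If two of p1, p2, p3 coincide, writing (X, 0, 0) = (P1, P2, P3) + (Y, Y, Y) shows that
   X = P1 - P2 lies in p1 for every X in g0, which is absurd.  Conversely, for three
   distinct lines l1, l2, l3 one needs a single Y in g0 with (Xj - Y) lj <= lj for all j.
   In sl(2) this is a 3x3 linear system whose determinant is, up to a factor 2, the
   product of the pairwise determinants of the lines.  In so(n,1) distinct null lines are
   never orthogonal, and Y is assembled from the rank-two elements a b^T J - b a^T J. *)

Section LineStabilizers.
Variables (F : fieldType) (k : nat).
Notation M := 'M[F]_k.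
Notation V := 'cV[F]_k.

Definition stab_line (g0 : M -> Prop) (v : V) (X : M) : Prop :=
  g0 X /\ exists c, X *m v = c *: v.

Definition proportional (v w : V) : Prop := exists t, w = t *: v.

Definition subset_diff (g0 p q : M -> Prop) : Prop :=
  forall X, g0 X -> exists P Q, [/\ p P, q Q & X = P - Q].

Lemma conj_setP (pstd : M -> Prop) g : g \in unitmx ->
  forall X, (exists Y, pstd Y /\ X = g *m Y *m invmx g) <-> pstd (invmx g *m X *m g).
Proof.
move=> gu X; split=> [[Y [pY ->]]|pX].
  by rewrite !mulmxA mulVmx // mul1mx mulmxKV.
exists (invmx g *m X *m g); split => //.
by rewrite !mulmxA mulmxV // mul1mx mulmxK.
Qed.

Lemma stab_line_conj (g0 : M -> Prop) (v : V) g X : g \in unitmx ->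
  (g0 (invmx g *m X *m g) <-> g0 X) ->
  stab_line g0 v (invmx g *m X *m g) <-> stab_line g0 (g *m v) X.
Proof.
move=> gu g0J; rewrite /stab_line g0J; split=> -[g0X [c e]]; split => //; exists c.
  by rewrite scalemxAr -e !mulmxA mulmxV // mul1mx.
by rewrite -!mulmxA e -scalemxAr mulmxA mulVmx // mul1mx.
Qed.

Lemma stab_line_scale (g0 : M -> Prop) (v w : V) t : w != 0 -> w = t *: v ->
  forall X, stab_line g0 w X <-> stab_line g0 v X.
Proof.
move=> w0 ew X; have t0 : t != 0 by apply: contra w0 => /eqP t0; rewrite ew t0 scale0r.
rewrite /stab_line ew; split=> -[g0X [c e]]; split => //; exists c.
  by apply: (scalerI t0); rewrite scalemxAr e !scalerA mulrC.
by rewrite -scalemxAr e !scalerA mulrC.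
Qed.

Lemma stab_lineB (g0 : M -> Prop) (v : V) (P Q : M) :
  (forall X Y, g0 X -> g0 Y -> g0 (X - Y)) ->
  stab_line g0 v P -> stab_line g0 v Q -> stab_line g0 v (P - Q).
Proof.
move=> g0B [gP [a eP]] [gQ [b eQ]]; split; first exact: g0B.
by exists (a - b); rewrite mulmxBl eP eQ scalerBl.
Qed.

Lemma unit_mulmx_neq0 g (v : V) : g \in unitmx -> v != 0 -> g *m v != 0.
Proof. by move=> gu; apply: contraNneq => gv0; rewrite -(mulKmx gu v) gv0 mulmx0. Qed.

Lemma decomp_sub (g0 p1 p2 p3 q1 q2 q3 : M -> Prop) :
  (forall X, p1 X -> q1 X) -> (forall X, p2 X -> q2 X) -> (forall X, p3 X -> q3 X) ->
  decomp g0 p1 p2 p3 -> decomp g0 q1 q2 q3.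
Proof.
move=> s1 s2 s3 D X1 X2 X3 h1 h2 h3.
have [Y [P1 [P2 [P3 [[gY pP1 pP2 pP3] eX]]]]] := D _ _ _ h1 h2 h3.
by exists Y, P1, P2, P3; split=> //; split; auto.
Qed.

Lemma decomp_subset_diff (g0 p1 p2 p3 : M -> Prop) : g0 0 -> decomp g0 p1 p2 p3 ->
  [/\ subset_diff g0 p1 p2, subset_diff g0 p1 p3 & subset_diff g0 p2 p3].
Proof.
move=> g00 D.
have diffE (X P Q Y : M) : X = P + Y -> 0 = Q + Y -> X = P - Q.
  by move=> -> /esym/eqP; rewrite addr_eq0 => /eqP ->; rewrite opprK.
split=> X gX.
- have [Y [P1 [P2 [P3 [[_ ? ? _] [e1 e2 _]]]]]] := D _ _ _ gX g00 g00.
  by exists P1, P2; split=> //; apply: diffE e1 e2.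
- have [Y [P1 [P2 [P3 [[_ ? _ ?] [e1 _ e3]]]]]] := D _ _ _ gX g00 g00.
  by exists P1, P3; split=> //; apply: diffE e1 e3.
- have [Y [P1 [P2 [P3 [[_ _ ? ?] [_ e2 e3]]]]]] := D _ _ _ g00 gX g00.
  by exists P2, P3; split=> //; apply: diffE e2 e3.
Qed.

Section Criterion.
Variables (G0 g0 pstd : M -> Prop) (v0 : V) (Z : M).
Hypothesis G0_unit : forall g, G0 g -> g \in unitmx.
Hypothesis g0_conj : forall g X, G0 g -> g0 (invmx g *m X *m g) <-> g0 X.
Hypothesis g00 : g0 0.
Hypothesis g0B : forall X Y, g0 X -> g0 Y -> g0 (X - Y).
Hypothesis pstdE : forall X, pstd X <-> stab_line g0 v0 X.
Hypothesis g0Z : g0 Z.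
Hypothesis Z_notin_pstd : ~ pstd Z.

Let stab g := stab_line g0 (g *m v0).

Lemma minpar_stab_line p :
  minpar G0 pstd p -> exists2 g, G0 g & forall X, p X <-> stab g X.
Proof.
case=> g [Gg pE]; exists g => // X.
by rewrite pE conj_setP ?G0_unit // pstdE stab_line_conj ?G0_unit ?g0_conj.
Qed.

Lemma stab_line_minpar g : G0 g -> minpar G0 pstd (stab g).
Proof.
move=> Gg; exists g; split => // X.
by rewrite conj_setP ?G0_unit // pstdE stab_line_conj ?G0_unit ?g0_conj.
Qed.

Lemma orbit_neq0 g : G0 g -> g *m v0 != 0.
Proof.
move=> Gg; apply: unit_mulmx_neq0 (G0_unit Gg) _; apply/eqP => v00.
by apply: Z_notin_pstd; apply/pstdE; split => //; exists 0; rewrite v00 mulmx0 scaler0.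
Qed.

Lemma minpar_not_subset_diff_self p : minpar G0 pstd p -> ~ subset_diff g0 p p.
Proof.
case/minpar_stab_line=> g Gg pE sub; have gu := G0_unit Gg.
pose W := g *m Z *m invmx g.
have WZ : invmx g *m W *m g = Z by rewrite /W !mulmxA mulVmx // mul1mx mulmxKV.
have gW : g0 W by rewrite -(g0_conj _ Gg) WZ.
have : stab g W.
  by have [P [Q [/pE pP /pE pQ ->]]] := sub W gW; apply: stab_lineB.
by rewrite /stab -stab_line_conj ?g0_conj // WZ -pstdE.
Qed.

Lemma decomp_pairwise_distinct p1 p2 p3 :
  minpar G0 pstd p1 -> minpar G0 pstd p2 ->
  decomp g0 p1 p2 p3 -> pairwise_distinct p1 p2 p3.
Proof.
move=> m1 m2 /(decomp_subset_diff g00) [d12 d13 d23].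
have same_subset_diff p q r : same_set q r -> subset_diff g0 p q -> subset_diff g0 p r.
  by move=> qr sub X /sub [P [Q [pP /qr rQ ->]]]; exists P, Q.
split=> same.
- by apply: (minpar_not_subset_diff_self m1); apply: same_subset_diff d12 => X; rewrite same.
- by apply: (minpar_not_subset_diff_self m1); apply: same_subset_diff d13 => X; rewrite same.
- by apply: (minpar_not_subset_diff_self m2); apply: same_subset_diff d23 => X; rewrite same.
Qed.

Lemma distinct_not_proportional g1 g2 (p1 p2 : M -> Prop) : G0 g2 ->
  (forall X, p1 X <-> stab g1 X) -> (forall X, p2 X <-> stab g2 X) ->
  ~ same_set p1 p2 -> ~ proportional (g1 *m v0) (g2 *m v0).
Proof.
move=> G2 p1E p2E nsame [t e]; apply: nsame => X.
by rewrite p1E p2E /stab (stab_line_scale _ (orbit_neq0 G2) e).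
Qed.

Hypothesis decomp_lines : forall g1 g2 g3, G0 g1 -> G0 g2 -> G0 g3 ->
  ~ proportional (g1 *m v0) (g2 *m v0) -> ~ proportional (g1 *m v0) (g3 *m v0) ->
  ~ proportional (g2 *m v0) (g3 *m v0) -> decomp g0 (stab g1) (stab g2) (stab g3).

Hypothesis three_lines : exists g1 g2 g3, [/\ G0 g1, G0 g2, G0 g3 &
  [/\ ~ proportional (g1 *m v0) (g2 *m v0), ~ proportional (g1 *m v0) (g3 *m v0)
    & ~ proportional (g2 *m v0) (g3 *m v0)]].

Lemma prop61_of_line_stabilizers : Prop61 G0 g0 pstd.
Proof.
split=> [p1 p2 p3 m1 m2 m3|]; last first.
  have [g1 [g2 [g3 [G1 G2 G3 [n12 n13 n23]]]]] := three_lines.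
  exists (stab g1), (stab g2), (stab g3).
  by split; [exact: stab_line_minpar..|exact: decomp_lines].
split; first exact: decomp_pairwise_distinct.
have [g1 G1 p1E] := minpar_stab_line m1; have [g2 G2 p2E] := minpar_stab_line m2.
have [g3 G3 p3E] := minpar_stab_line m3.
case=> [n12 n13 n23]; apply: (decomp_sub _ _ _ (decomp_lines G1 G2 G3 _ _ _)).
- by move=> X /p1E.
- by move=> X /p2E.
- by move=> X /p3E.
- exact: distinct_not_proportional G2 p1E p2E n12.
- exact: distinct_not_proportional G3 p1E p3E n13.
- exact: distinct_not_proportional G3 p2E p3E n23.
Qed.
End Criterion.
End LineStabilizers.

Section SL2.
Variable F : fieldType.
Hypothesis two_neq0 : (2 : F) != 0.
Notation M := 'M[F]_2.
Notation V := 'cV[F]_2.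

Lemma ord2_cases (i : 'I_2) : i = ord0 \/ i = ord_max.
Proof. by case: i => -[|[|//]] ?; [left|right]; apply/val_inj. Qed.

Lemma sum2 (G : 'I_2 -> F) : \sum_i G i = G ord0 + G ord_max.
Proof. by rewrite big_ord_recl big_ord1; congr (_ + G _); apply/val_inj. Qed.

Lemma det2 (A : M) :
  \det A = A ord0 ord0 * A ord_max ord_max - A ord0 ord_max * A ord_max ord0.
Proof.
rewrite (expand_det_row _ ord0) sum2 /cofactor !det_mx11 !mxE /=.
have -> : lift ord0 (0 : 'I_1) = ord_max :> 'I_2 by apply/val_inj.
have -> : lift ord_max (0 : 'I_1) = ord0 :> 'I_2 by apply/val_inj.
by rewrite expr0 expr1 mul1r mulN1r mulrN.
Qed.

Definition cross (v w : V) : F := v ord0 0 * w ord_max 0 - v ord_max 0 * w ord0 0.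

Lemma crossB (v w w' : V) : cross v (w - w') = cross v w - cross v w'.
Proof. by rewrite /cross !mxE; ring. Qed.

Lemma proportionalP (v w : V) : v != 0 -> proportional v w <-> cross v w = 0.
Proof.
move=> v0; split=> [[t ->]|].
  by rewrite /cross !mxE; ring.
rewrite /cross => /eqP; rewrite subr_eq0 => /eqP c0.
have [a0|a0] := eqVneq (v ord0 0) 0.
  have c_neq0 : v ord_max 0 != 0.
    apply: contra v0 => /eqP c0'; apply/eqP/matrixP => i j.
    by rewrite (ord1 j) mxE; case: (ord2_cases i) => ->.
  have w0 : w ord0 0 = 0.
    by move: c0; rewrite a0 mul0r => /esym/eqP; rewrite mulf_eq0 (negbTE c_neq0) => /eqP.
  exists (w ord_max 0 / v ord_max 0); apply/matrixP => i j; rewrite (ord1 j) mxE.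
  by case: (ord2_cases i) => ->; rewrite ?a0 ?w0 ?mulr0 // divfK.
exists (w ord0 0 / v ord0 0); apply/matrixP => i j; rewrite (ord1 j) mxE.
case: (ord2_cases i) => ->; first by rewrite divfK.
by apply: (mulfI a0); rewrite c0; field.
Qed.

(* With Y = [[y, z], [w, -y]] and v = (a, c), cross v (Y v) = a^2 w - 2 a c y - c^2 z;
   the values of y, z, w below are Cramer's rule for the three such equations. *)
Lemma sl2_interpolation (v1 v2 v3 : V) (r1 r2 r3 : F) :
  cross v1 v2 != 0 -> cross v1 v3 != 0 -> cross v2 v3 != 0 ->
  exists2 Y, sl2 Y & [/\ cross v1 (Y *m v1) = r1, cross v2 (Y *m v2) = r2
                       & cross v3 (Y *m v3) = r3].
Proof.
rewrite /cross; set a1 := v1 ord0 0; set c1 := v1 ord_max 0; set a2 := v2 ord0 0.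
set c2 := v2 ord_max 0; set a3 := v3 ord0 0; set c3 := v3 ord_max 0.
move=> D12 D13 D23.
pose N1 := -2 * (a1 * c2 - c1 * a2) * (a1 * c3 - c1 * a3).
pose N2 := 2 * (a1 * c2 - c1 * a2) * (a2 * c3 - c2 * a3).
pose N3 := -2 * (a1 * c3 - c1 * a3) * (a2 * c3 - c2 * a3).
pose y := - (r1 / N1 * (a2 * c3 + a3 * c2) + r2 / N2 * (a1 * c3 + a3 * c1)
             + r3 / N3 * (a1 * c2 + a2 * c1)).
pose z := 2 * (r1 / N1 * a2 * a3 + r2 / N2 * a1 * a3 + r3 / N3 * a1 * a2).
pose w := -2 * (r1 / N1 * c2 * c3 + r2 / N2 * c1 * c3 + r3 / N3 * c1 * c2).
exists (\matrix_(i, j) if i == ord0 then (if j == ord0 then y else z)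
                        else (if j == ord0 then w else - y)).
  by rewrite /sl2 /mxtrace sum2 !mxE /= subrr.
rewrite !mxE !sum2 !mxE /= -/a1 -/c1 -/a2 -/c2 -/a3 -/c3 /y /z /w /N1 /N2 /N3.
by split; field; rewrite D12 D13 D23 oppr_eq0 two_neq0.
Qed.

Lemma cross_neq0 (v w : V) : cross v w != 0 -> (v != 0) && (w != 0).
Proof.
move=> c; apply/andP; split; apply: contraNneq c => ->;
  by rewrite /cross !mxE !(mul0r, mulr0) subrr.
Qed.

Lemma cross_neq0_not_proportional (v w : V) : cross v w != 0 -> ~ proportional v w.
Proof.
move=> /[dup] /cross_neq0 /andP [v0 _] c /(proportionalP _ v0) c0.
by rewrite c0 eqxx in c.
Qed.

Lemma sl2B (X Y : M) : sl2 X -> sl2 Y -> sl2 (X - Y).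
Proof. by rewrite /sl2 linearB /= => -> ->; rewrite subrr. Qed.

Lemma stab_line_sl2P (v : V) X :
  v != 0 -> stab_line (@sl2 F) v X <-> sl2 X /\ cross v (X *m v) = 0.
Proof. by move=> v0; rewrite /stab_line -proportionalP. Qed.

Lemma sl2_decomp (v1 v2 v3 : V) :
  cross v1 v2 != 0 -> cross v1 v3 != 0 -> cross v2 v3 != 0 ->
  decomp (@sl2 F) (stab_line (@sl2 F) v1) (stab_line (@sl2 F) v2) (stab_line (@sl2 F) v3).
Proof.
move=> D12 D13 D23 X1 X2 X3 s1 s2 s3.
have [Y sY [e1 e2 e3]] := sl2_interpolation (cross v1 (X1 *m v1)) (cross v2 (X2 *m v2))
  (cross v3 (X3 *m v3)) D12 D13 D23.
have /andP [v1_0 v2_0] := cross_neq0 D12; have /andP [_ v3_0] := cross_neq0 D13.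
exists Y, (X1 - Y), (X2 - Y), (X3 - Y); split; last by split; rewrite subrK.
split=> //; apply/stab_line_sl2P => //; split; try exact: sl2B;
  by rewrite mulmxBl crossB ?e1 ?e2 ?e3 subrr.
Qed.

Let e0 : V := delta_mx ord0 0.

Lemma mul_e0 (A : M) i : (A *m e0) i 0 = A i ord0.
Proof. by rewrite -colE mxE. Qed.

Lemma sl2_pstdE X : sl2_pstd X <-> stab_line (@sl2 F) e0 X.
Proof.
rewrite /sl2_pstd /stab_line; split=> [[tX eX]|[tX [c eX]]]; split=> //.
  exists (X ord0 ord0); apply/matrixP => i j; rewrite (ord1 j) mul_e0 !mxE.
  by case: (ord2_cases i) => ->; rewrite /= ?mulr1 ?mulr0.
by have := congr1 (fun A : V => A ord_max 0) eX; rewrite /= mul_e0 !mxE /= mulr0.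
Qed.

Lemma sl2_prop61 : Prop61 (@SL2 F) (@sl2 F) (@sl2_pstd F).
Proof.
have SL2_unit g : SL2 g -> g \in unitmx by move=> dg; rewrite unitmxE dg unitr1.
apply: (prop61_of_line_stabilizers (v0 := e0) (Z := delta_mx ord_max ord0)).
- exact: SL2_unit.
- by move=> g X /SL2_unit gu; rewrite /sl2 mxtrace_mulC mulmxA mulmxV // mul1mx.
- by rewrite /sl2 linear0.
- exact: sl2B.
- exact: sl2_pstdE.
- by rewrite /sl2 /mxtrace sum2 !mxE /= addr0.
- by rewrite /sl2_pstd mxE /= => -[_ /eqP]; rewrite oner_eq0.
- have e0_neq0 : e0 != 0.
    by apply/eqP => /matrixP /(_ ord0 0); rewrite !mxE /= => /eqP; rewrite oner_eq0.
  have cross_orbit g h :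
      SL2 g -> ~ proportional (g *m e0) (h *m e0) -> cross (g *m e0) (h *m e0) != 0.
    move=> /SL2_unit gu np; apply/eqP => c0; apply: np.
    exact/(proportionalP _ (unit_mulmx_neq0 gu e0_neq0)).
  move=> g1 g2 g3 G1 G2 G3 n12 n13 n23.
  by apply: sl2_decomp; apply: cross_orbit.
pose rot : M := \matrix_(i, j) (if i == j then 0 else if i == ord0 then -1 else 1).
pose shear : M := \matrix_(i, j) (if (i == ord0) && (j == ord_max) then 0 else 1).
exists 1%:M, rot, shear; split; rewrite /SL2 ?det1 ?det2 ?mxE /=; try ring.
by split; apply: cross_neq0_not_proportional;
  rewrite /cross !mul_e0 !mxE /= ?(mulr1, mulr0, subr0, sub0r, oppr_eq0) oner_eq0.
Qed.
End SL2.

Section SOn1.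
Variables (R : realType) (n : nat).
Notation M := 'M[R]_n.+1.
Notation V := 'cV[R]_n.+1.
Notation J := (Jform R n).
Notation e := (null_v R n).

Definition jsign (i : 'I_n.+1) : R := if i == ord_max then -1 else 1.

Lemma JformE : J = diag_mx (\row_i jsign i).
Proof.
by apply/matrixP => i j; rewrite !mxE /jsign; case: (i == j); rewrite ?mulr1n ?mulr0n.
Qed.

Lemma tr_Jform : J^T = J.
Proof. by rewrite JformE tr_diag_mx. Qed.

Lemma Jform_sqr : J *m J = 1%:M.
Proof.
rewrite JformE mulmx_diag; apply/matrixP => i j; rewrite !mxE /jsign.
by case: (i == ord_max); rewrite ?mulr1 ?mulrNN ?mulr1.
Qed.

Definition bform (x y : V) : R := (x^T *m J *m y) 0 0.

Lemma bformC x y : bform x y = bform y x.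
Proof.
rewrite /bform; have -> : (x^T *m J *m y) 0 0 = (x^T *m J *m y)^T 0 0
  by rewrite [RHS]mxE.
by rewrite !trmx_mul trmxK tr_Jform mulmxA.
Qed.

Lemma bformE x y : bform x y = \sum_i x i 0 * y i 0 * jsign i.
Proof.
by rewrite /bform JformE mul_mx_diag mxE; apply: eq_bigr => i _; rewrite !mxE; ring.
Qed.

Lemma bform_delta i (x : V) : bform (delta_mx i 0) x = x i 0 * jsign i.
Proof.
rewrite bformE (bigD1 i) //= big1 => [|j /negbTE ji]; rewrite !mxE ?ji ?eqxx ?mul1r ?addr0 //.
by rewrite !mul0r.
Qed.

Definition wedge (a b : V) : M := a *m (b^T *m J) - b *m (a^T *m J).

Lemma wedge_mul a b x : wedge a b *m x = bform b x *: a - bform a x *: b.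
Proof.
rewrite /wedge mulmxBl -!mulmxA /bform [b^T *m (J *m x)]mx11_scalar.
by rewrite [a^T *m (J *m x)]mx11_scalar !mul_mx_scalar !mulmxA.
Qed.

Lemma so_n1_wedge a b : so_n1 (wedge a b).
Proof.
rewrite /so_n1 /wedge linearB /= !trmx_mul !trmxK tr_Jform mulmxBl mulmxBr !mulmxA.
by rewrite addrA subrK subrr.
Qed.

Lemma so_n10 : so_n1 (0 : M).
Proof. by rewrite /so_n1 trmx0 mul0mx mulmx0 addr0. Qed.

Lemma so_n1D (X Y : M) : so_n1 X -> so_n1 Y -> so_n1 (X + Y).
Proof. by rewrite /so_n1 linearD /= mulmxDl mulmxDr addrACA => -> ->; rewrite addr0. Qed.

Lemma so_n1Z c (X : M) : so_n1 X -> so_n1 (c *: X).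
Proof.
by rewrite /so_n1 linearZ /= -scalemxAl -scalemxAr -scalerDr => ->; rewrite scaler0.
Qed.

Lemma so_n1B (X Y : M) : so_n1 X -> so_n1 Y -> so_n1 (X - Y).
Proof. by move=> sX sY; rewrite -scaleN1r; apply/so_n1D/so_n1Z. Qed.

Lemma so_n1_skew (X : M) v : so_n1 X -> bform (X *m v) v = 0.
Proof.
move=> sX; have XJ : X^T *m J = - (J *m X) by apply/eqP; rewrite -addr_eq0 sX.
have : bform (X *m v) v *+ 2 = 0.
  rewrite mulr2n {2}bformC /bform trmx_mul -(mulmxA v^T) XJ mulmxN mulNmx mxE !mulmxA.
  by rewrite addNr.
by move/eqP; rewrite mulrn_eq0 => /eqP.
Qed.

Lemma so_line_correction (v1 v2 v3 w : V) :
  bform v1 v1 = 0 -> bform v2 v2 = 0 -> bform v3 v3 = 0 -> bform w v1 = 0 ->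
  bform v1 v2 != 0 -> bform v1 v3 != 0 ->
  exists2 Y, so_n1 Y & [/\ exists s, Y *m v1 = w + s *: v1,
                          exists s, Y *m v2 = s *: v2 & exists s, Y *m v3 = s *: v3].
Proof.
(* The wedge w vj terms contribute w to Y v1 and cancel on v2 and v3; the last two terms
   remove the v1- and v3-components of Y v2 and the v1- and v2-components of Y v3. *)
move=> n1 n2 n3 wv1 b12 b13.
pose k := - (2 * bform v1 v2 * bform v1 v3)^-1.
pose Y := (bform v2 v3 * k) *: wedge w v1 + (2 * bform v1 v2)^-1 *: wedge w v2
  + (2 * bform v1 v3)^-1 *: wedge w v3
  + (k * bform w v2) *: wedge v1 v3 + (k * bform w v3) *: wedge v1 v2.
have YE x : Y *m x = (bform v2 v3 * k) *: (bform v1 x *: w - bform w x *: v1)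
  + (2 * bform v1 v2)^-1 *: (bform v2 x *: w - bform w x *: v2)
  + (2 * bform v1 v3)^-1 *: (bform v3 x *: w - bform w x *: v3)
  + (k * bform w v2) *: (bform v3 x *: v1 - bform v1 x *: v3)
  + (k * bform w v3) *: (bform v2 x *: v1 - bform v1 x *: v2).
  by rewrite /Y !mulmxDl -!scalemxAl !wedge_mul.
exists Y; first by rewrite /Y; repeat apply: so_n1D; apply/so_n1Z/so_n1_wedge.
split.
- exists (k * (bform w v2 * bform v1 v3 + bform w v3 * bform v1 v2)).
  rewrite YE; apply/matrixP => i j; rewrite !mxE (bformC v2 v1) (bformC v3 v1) n1 wv1 /k.
  by field; rewrite b12 b13.
- exists (- (2 * bform v1 v2)^-1 * bform w v2 - k * bform w v3 * bform v1 v2).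
  rewrite YE; apply/matrixP => i j; rewrite !mxE (bformC v3 v2) n2 /k.
  by field; rewrite b12 b13.
- exists (- (2 * bform v1 v3)^-1 * bform w v3 - k * bform w v2 * bform v1 v3).
  rewrite YE; apply/matrixP => i j; rewrite !mxE n3 /k.
  by field; rewrite b12 b13.
Qed.

Lemma so_decomp (v1 v2 v3 : V) :
  bform v1 v1 = 0 -> bform v2 v2 = 0 -> bform v3 v3 = 0 ->
  bform v1 v2 != 0 -> bform v1 v3 != 0 -> bform v2 v3 != 0 ->
  decomp (@so_n1 R n) (stab_line (@so_n1 R n) v1) (stab_line (@so_n1 R n) v2)
    (stab_line (@so_n1 R n) v3).
Proof.
move=> n1 n2 n3 b12 b13 b23 X1 X2 X3 s1 s2 s3.
have b21 : bform v2 v1 != 0 by rewrite bformC.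
have b31 : bform v3 v1 != 0 by rewrite bformC.
have b32 : bform v3 v2 != 0 by rewrite bformC.
have [Y1 sY1 [[a1 e11] [a2 e12] [a3 e13]]] :=
  so_line_correction n1 n2 n3 (so_n1_skew v1 s1) b12 b13.
have [Y2 sY2 [[c2 e22] [c1 e21] [c3 e23]]] :=
  so_line_correction n2 n1 n3 (so_n1_skew v2 s2) b21 b23.
have [Y3 sY3 [[d3 e33] [d1 e31] [d2 e32]]] :=
  so_line_correction n3 n1 n2 (so_n1_skew v3 s3) b31 b32.
pose Y := Y1 + Y2 + Y3.
have sY : so_n1 Y by rewrite /Y; apply/so_n1D/sY3/so_n1D.
exists Y, (X1 - Y), (X2 - Y), (X3 - Y); split; last by split; rewrite subrK.
split=> //; (split; first exact: so_n1B).
- exists (- (a1 + c1 + d1)); rewrite mulmxBl !mulmxDl e11 e21 e31.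
  by apply/matrixP => i j; rewrite !mxE; ring.
- exists (- (a2 + c2 + d2)); rewrite mulmxBl !mulmxDl e12 e22 e32.
  by apply/matrixP => i j; rewrite !mxE; ring.
- exists (- (a3 + c3 + d3)); rewrite mulmxBl !mulmxDl e13 e23 e33.
  by apply/matrixP => i j; rewrite !mxE; ring.
Qed.

Lemma isotropic_last_eq0 (u : V) : bform u u = 0 -> u ord_max 0 = 0 -> u = 0.
Proof.
rewrite bformE (bigD1 ord_max) //= => S uN; rewrite uN !mul0r add0r in S.
have S' : \sum_(i | i != ord_max) u i 0 ^+ 2 = 0.
  by rewrite -[RHS]S; apply: eq_bigr => i /negbTE iN; rewrite /jsign iN mulr1 expr2.
apply/matrixP => i j; rewrite (ord1 j) mxE.
have [->|iN] := eqVneq i ord_max; first exact: uN.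
by apply/eqP; rewrite -sqrf_eq0; apply/eqP/(psumr_eq0P (fun i _ => sqr_ge0 (u i 0)) S').
Qed.

Lemma isotropic_orthogonal_proportional (x y : V) :
  bform x x = 0 -> bform y y = 0 -> bform x y = 0 -> x != 0 -> proportional x y.
Proof.
move=> nx ny nxy x0.
pose a := y ord_max 0; pose b := x ord_max 0; pose z := a *: x - b *: y.
have nz : bform z z = 0.
  have -> : bform z z = a ^+ 2 * bform x x - 2 * a * b * bform x y + b ^+ 2 * bform y y.
    rewrite !bformE !mulr_sumr -sumrB -big_split /=; apply: eq_bigr => i _.
    by rewrite /z !mxE; ring.
  by rewrite nx ny nxy !mulr0 subr0 addr0.
have z0 : z = 0 by apply: isotropic_last_eq0 => //; rewrite /z !mxE /a /b mulrC subrr.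
have b0 : b != 0 by apply: contra x0 => /eqP b0; apply/eqP/isotropic_last_eq0.
exists (a / b); apply/matrixP => i j; rewrite mxE.
have /eqP := congr1 (fun m : V => m i j) z0; rewrite /z !mxE subr_eq0 => /eqP e.
by apply: (mulfI b0); rewrite -e; field.
Qed.
End SOn1.

Section SOn1Group.
Variables (R : realType) (n : nat).
Notation M := 'M[R]_n.+1.
Notation J := (Jform R n).
Notation e := (null_v R n).

Definition isom (g : M) := g^T *m J *m g = J.

Lemma isom_invmxE (g : M) : isom g -> g \in unitmx -> invmx g = J *m g^T *m J.
Proof.
move=> hg gu; have gJ : J *m g^T *m J *m g = 1%:M.
  by rewrite -!mulmxA (mulmxA g^T) hg Jform_sqr.
by rewrite -[invmx g]mul1mx -gJ -!mulmxA mulmxV // mulmx1 !mulmxA.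
Qed.

Lemma isom_trmx (g : M) : isom g -> g \in unitmx -> isom g^T.
Proof.
move=> hg gu; have := mulmxV gu; rewrite isom_invmxE // !mulmxA => gJ.
by rewrite /isom trmxK -[LHS]mulmx1 -Jform_sqr mulmxA gJ mul1mx.
Qed.

Lemma isom_mul (a b : M) : isom a -> isom b -> isom (a *m b).
Proof. by move=> ha hb; rewrite /isom trmx_mul !mulmxA -(mulmxA b^T) -(mulmxA b^T) ha. Qed.

Lemma isom_bform (g : M) x y : isom g -> bform (g *m x) (g *m y) = bform x y.
Proof.
move=> hg; rewrite /bform.
have -> : (g *m x)^T *m J *m (g *m y) = x^T *m (g^T *m J *m g) *m y
  by rewrite trmx_mul !mulmxA.
by rewrite hg.
Qed.

Lemma so_n1_conj (g X : M) : isom g -> g \in unitmx ->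
  so_n1 (invmx g *m X *m g) <-> so_n1 X.
Proof.
move=> hg gu; have gtu : g^T \in unitmx by rewrite unitmx_tr.
rewrite /so_n1; have -> : (invmx g *m X *m g)^T *m J + J *m (invmx g *m X *m g) =
          g^T *m (X^T *m J + J *m X) *m g.
  rewrite isom_invmxE // !trmx_mul !trmxK tr_Jform mulmxDr mulmxDl.
  by rewrite !mulmxA -!(mulmxA _ J J) !Jform_sqr !mulmx1 mul1mx.
split=> [sX|->]; last by rewrite mulmx0 mul0mx.
by rewrite -[LHS](mulKmx gtu) -[_ *m (_ + _)](mulmxK gu) mulmxA sX mulmx0 mul0mx.
Qed.

Lemma isom_perm_mx (s : 'S_n.+1) : s ord_max = ord_max -> isom (perm_mx s).
Proof.
move=> s_max; rewrite /isom tr_perm_mx -row_permE.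
have -> : perm_mx s = perm_mx ((s^-1)^-1)%g :> M by rewrite invgK.
rewrite -col_permE JformE; apply/matrixP => i j; rewrite !mxE.
rewrite (inj_eq (@perm_inj _ s^-1)) /jsign -[(s^-1)%g i == _](inj_eq (@perm_inj _ s)).
by rewrite permKV s_max.
Qed.

Lemma isom_diag_mx (d : 'rV[R]_n.+1) : (forall i, d 0 i ^+ 2 = 1) -> isom (diag_mx d).
Proof.
move=> d2; rewrite /isom tr_diag_mx JformE !mulmx_diag; congr diag_mx.
by apply/rowP => i; rewrite !mxE mulrC mulrA -expr2 d2 mul1r.
Qed.

Lemma SOe_isom (g : M) : SOe g -> isom g.
Proof. by case. Qed.

Lemma SOe_unit (g : M) : SOe g -> g \in unitmx.
Proof. by case=> _ d _; rewrite unitmxE d unitr1. Qed.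

Lemma SOe1 : SOe (1%:M : M).
Proof. by split; rewrite ?/isom ?trmx1 ?mulmx1 ?mul1mx ?det1 // mxE eqxx ltr01. Qed.

Lemma SOe_trmx (g : M) : SOe g -> SOe g^T.
Proof. by move=> /[dup] /SOe_unit gu [hg dg pg]; split; rewrite ?isom_trmx ?det_tr ?mxE. Qed.

Section NullLine.
Hypothesis n_gt0 : (0 < n)%N.

Lemma ord0_neq_max : ord0 != ord_max :> 'I_n.+1.
Proof. by rewrite -(inj_eq val_inj) /= eq_sym -lt0n. Qed.

Lemma null_v_isotropic : bform e e = 0.
Proof.
rewrite bformE (bigD1 ord0) //= (bigD1 ord_max) /=; last by rewrite eq_sym ord0_neq_max.
rewrite big1 => [|i /andP [i0 iN]]; last by rewrite !mxE (negbTE i0) (negbTE iN) !mul0r.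
by rewrite !mxE /jsign !eqxx /= (negbTE ord0_neq_max) orbT !mul1r addr0 addrN.
Qed.

Lemma orbit_isotropic (g : M) : SOe g -> bform (g *m e) (g *m e) = 0.
Proof. by move=> /SOe_isom hg; rewrite isom_bform // null_v_isotropic. Qed.

Lemma orbit_bform_neq0 (g h : M) : SOe g -> SOe h ->
  ~ proportional (g *m e) (h *m e) -> bform (g *m e) (h *m e) != 0.
Proof.
move=> G H np; apply/eqP => b0; apply: np.
apply: isotropic_orthogonal_proportional; rewrite ?orbit_isotropic //.
apply: unit_mulmx_neq0 (SOe_unit G) _.
by apply/eqP => /matrixP /(_ ord0 0); rewrite !mxE eqxx => /eqP; rewrite oner_eq0.
Qed.
End NullLine.
End SOn1Group.

Section SOn1Prop61.
Variables (R : realType) (n : nat).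
Hypothesis n_ge2 : (2 <= n)%N.
Notation M := 'M[R]_n.+1.
Notation V := 'cV[R]_n.+1.
Notation e := (null_v R n).

Let n_gt0 : (0 < n)%N. Proof. exact: leq_trans n_ge2. Qed.

Let i1 : 'I_n.+1 := inord 1.

Let i1_val : val i1 = 1%N.
Proof. by rewrite /i1 /= inordK // ltnS ltnW. Qed.

Let i1_neq0 : i1 != ord0.
Proof. by apply/eqP => /(congr1 val); rewrite i1_val. Qed.

Let i1_neq_max : i1 != ord_max.
Proof. by apply/eqP => /(congr1 val); rewrite i1_val /= => n1; move: n_ge2; rewrite -n1. Qed.

Let e_i1 : e i1 0 = 0.
Proof. by rewrite mxE (negbTE i1_neq0) (negbTE i1_neq_max). Qed.

Let e_ord0 : e ord0 0 = 1.
Proof. by rewrite mxE eqxx. Qed.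

Let e_max : e ord_max 0 = 1.
Proof. by rewrite mxE eqxx orbT. Qed.

Let Z : M := wedge (delta_mx i1 0) (delta_mx ord0 0).

Let Z_not_so_pstd : ~ so_pstd Z.
Proof.
case=> _ [c]; rewrite /Z wedge_mul !bform_delta e_i1 mul0r scale0r subr0.
move=> /matrixP /(_ i1 0); rewrite !mxE !eqxx (negbTE i1_neq0) (negbTE i1_neq_max).
by rewrite /jsign (negbTE (ord0_neq_max n_gt0)) /= mulr0 !mul1r => /eqP; rewrite oner_eq0.
Qed.

Let sig : 'S_n.+1 := tperm ord0 i1.

Let sig_max : sig ord_max = ord_max.
Proof. exact: tpermD (ord0_neq_max n_gt0) i1_neq_max. Qed.

Let flip1 : 'rV[R]_n.+1 := \row_i (if i == i1 then -1 else 1).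

(* The quarter turn e0 -> e1 -> -e0: rot and rot^T move the null line of e0 + en to those
   of e1 + en and -e1 + en. *)
Let rot : M := perm_mx sig *m diag_mx flip1.

Let SOe_rot : SOe rot.
Proof.
split.
- apply: isom_mul; first exact: isom_perm_mx sig_max.
  by apply: isom_diag_mx => i; rewrite mxE; case: ifP; rewrite ?sqrrN expr1n.
- rewrite det_mulmx det_perm odd_tperm eq_sym i1_neq0 det_diag (bigD1 i1) //= big1.
    by rewrite !mxE eqxx expr1 mulN1r mulr1 opprK.
  by move=> i /negbTE ii; rewrite mxE ii.
- rewrite /rot mul_mx_diag !mxE sig_max eqxx [ord_max == i1]eq_sym (negbTE i1_neq_max).
  by rewrite mulr1 ltr01.
Qed.

Let sig_i1 : sig i1 = ord0.
Proof. exact: tpermR. Qed.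

Let rot_e i : (rot *m e) i 0 = e (sig i) 0.
Proof.
have flip_e : diag_mx flip1 *m e = e.
  apply/matrixP => j k; rewrite (ord1 k) mul_diag_mx mxE [flip1 _ _]mxE.
  by case: eqVneq => [->|_]; rewrite ?e_i1 ?mulr0 ?mul1r.
by rewrite /rot -mulmxA flip_e -row_permE mxE.
Qed.

Let rotT_e i : (rot^T *m e) i 0 = flip1 0 i * e (sig i) 0.
Proof.
by rewrite /rot trmx_mul tr_perm_mx tpermV tr_diag_mx -mulmxA -row_permE mul_diag_mx !mxE.
Qed.

Let rot_lines_not_proportional :
  [/\ ~ proportional (1%:M *m e) (rot *m e), ~ proportional (1%:M *m e) (rot^T *m e)
    & ~ proportional (rot *m e) (rot^T *m e)].
Proof.
rewrite mul1mx; split=> -[t /matrixP et];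
  have scaleE (v : V) i : (t *: v) i 0 = t * v i 0 by rewrite mxE.
- move: (et i1 0); rewrite rot_e sig_i1 e_ord0 scaleE e_i1 mulr0.
  by move/eqP; rewrite oner_eq0.
- move: (et i1 0); rewrite rotT_e sig_i1 e_ord0 scaleE e_i1 mulr0.
  by rewrite mxE eqxx mulr1 => /eqP; rewrite oppr_eq0 oner_eq0.
- move: (et i1 0) (et ord_max 0); rewrite !rotT_e !scaleE !rot_e.
  rewrite sig_i1 sig_max e_ord0 e_max !mxE eqxx eq_sym (negbTE i1_neq_max) !mulr1.
  by move=> <- /eqP; rewrite -addr_eq0 -mulr2n mulrn_eq0 oner_eq0.
Qed.

Lemma so_n1_prop61 : Prop61 (@SOe R n) (@so_n1 R n) (@so_pstd R n).
Proof.
apply: (prop61_of_line_stabilizers (v0 := e) (Z := Z)).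
- exact: SOe_unit.
- by move=> g X G; apply: so_n1_conj (SOe_isom G) (SOe_unit G).
- exact: so_n10.
- exact: so_n1B.
- by [].
- exact: so_n1_wedge.
- exact: Z_not_so_pstd.
- move=> g1 g2 g3 G1 G2 G3 n12 n13 n23.
  by apply: so_decomp; rewrite ?orbit_isotropic //; apply: orbit_bform_neq0.
exists 1%:M, rot, rot^T; split; [exact: SOe1|exact: SOe_rot|exact: SOe_trmx SOe_rot|].
exact: rot_lines_not_proportional.
Qed.
End SOn1Prop61.

Theorem proposition6p1 (R : realType) :
  Prop61 (@SL2 R) (@sl2 R) (@sl2_pstd R) /\
  Prop61 (@SL2 R[i]) (@sl2 R[i]) (@sl2_pstd R[i]) /\
  (forall n : nat, (2 <= n)%N -> Prop61 (@SOe R n) (@so_n1 R n) (@so_pstd R n)).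
Proof.
split; first by apply: sl2_prop61; rewrite pnatr_eq0.
split; first by apply: sl2_prop61; rewrite pnatr_eq0.
exact: so_n1_prop61.
Qed.
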